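(* Let $B_1,B_2\subset\mathbb{R}^m/\mathbb{Z}^m$ be balls. Let $\mathbf{q}_1,\mathbf{q}_2\in\mathbb{Z}^n\setminus\{\mathbf0\}$ be parallel and $\mathbf{r}_1,\mathbf{r}_2\in\mathbb{Z}^{n'}\setminus\{\mathbf0\}$ be parallel, with $|\mathbf{q}_i|=|\mathbf{r}_i|$ for $i=1,2$, and such that either both pairs point in the same direction or both pairs point in opposite directions (i.e. $\mathbf{q}_1\cdot\mathbf{q}_2$ and $\mathbf{r}_1\cdot\mathbf{r}_2$ have the same sign). Then \[ |A_{n,m}(\mathbf{q}_1,B_1)\cap A_{n,m}(\mathbf{q}_2,B_2)|=|A_{n',m}(\mathbf{r}_1,B_1)\cap A_{n',m}(\mathbf{r}_2,B_2)|. \]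
   Context: For $\mathbf{q}\in\mathbb{Z}^n$, $|\mathbf{q}|=\max_i|q_i|$. Balls are max-norm balls in $\mathbb{R}^m/\mathbb{Z}^m$ and $|\cdot|$ is Lebesgue measure. For $\mathbf{q}\in\mathbb{Z}^n$ and a ball $B$, $A_{n,m}(\mathbf{q},B)=\{\mathbf{x}\in[0,1]^{nm}:\mathbf{q}\mathbf{x}+\mathbf{p}\in B\text{ for some }\mathbf{p}\in\mathbb{Z}^m\}$, where $\mathbf{x}$ is an $n\times m$ matrix and $\mathbf{q}\mathbf{x}$ the row-vector–matrix product. *)

From HB Require Import structures.
From mathcomp Require Import all_boot all_order all_algebra.
From mathcomp Require Import all_classical all_reals all_analysis.
Set Implicit Arguments. Unset Strict Implicit. Unset Printing Implicit Defensive.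
Import Order.TTheory GRing.Theory Num.Theory.
Local Open Scope classical_set_scope.
Local Open Scope ring_scope.

Definition supnormZ (n : nat) (q : 'rV[int]_n) : int :=
  \big[Num.max/0]_(i < n) `|q 0 i|.

Definition dotZ (n : nat) (q r : 'rV[int]_n) : int :=
  \sum_(i < n) q 0 i * r 0 i.

Definition parallelZ (R : realType) (n : nat) (q1 q2 : 'rV[int]_n) : Prop :=
  exists lam : R, map_mx intr q2 = lam *: map_mx intr q1.

(* The (open) max-norm ball in R^m/Z^m of center c and radius rho, seen as a
   Z^m-periodic subset of R^m: y mod Z^m lies in it iff y + p is within
   max-distance rho of c for some p in Z^m. *)
Definition torus_ball (R : realType) (m : nat) (c : 'rV[R]_m) (rho : R)
  : set 'rV[R]_m :=
  [set y | exists p : 'rV[int]_m, forall j, `|y 0 j + (p 0 j)%:~R - c 0 j| < rho].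

Definition A_set (R : realType) (n m : nat) (q : 'rV[int]_n)
  (c : 'rV[R]_m) (rho : R) : set 'M[R]_(n, m) :=
  [set x : 'M[R]_(n, m) | (forall i j, 0 <= x i j <= 1) /\
     exists p : 'rV[int]_m, torus_ball c rho (map_mx intr q *m x + map_mx intr p)].

Fixpoint iter_int01 (R : realType) (I : eqType) (s : seq I)
    (f : (I -> R) -> \bar R) (x : I -> R) : \bar R :=
  match s with
  | [::] => f x
  | i :: s' => (\int[@lebesgue_measure R]_(t in `[0%R, 1%R])
                   iter_int01 s' f (fun k => if k == i then t else x k))%E
  end.

(* Lebesgue measure of a subset S of [0,1]^{n x m} (n x m real matrices),
   computed as the iterated integral of its indicator over the unit cube
   (equal to the Lebesgue measure for measurable S by Tonelli). *)
Definition vol01 (R : realType) (n m : nat) (S : set 'M[R]_(n, m)) : \bar R :=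
  iter_int01 (enum [the finType of ('I_n * 'I_m)%type])
    (fun x => ((\1_S (\matrix_(i, j) x (i, j)) : R)%:E)) (fun _ => 0).

From HB Require Import structures.
From mathcomp Require Import all_boot all_order all_algebra.
From mathcomp Require Import all_classical all_reals all_analysis measurable_realfun.
From mathcomp Require Import ring lra.
Set Implicit Arguments. Unset Strict Implicit. Unset Printing Implicit Defensive.
Import Order.TTheory GRing.Theory Num.Theory.
Local Open Scope classical_set_scope.
Local Open Scope ring_scope.

(* Write the parallel vectors as q1 = d e and q2 = k e with e a nonzero integer
   vector, d > 0 and k / d in lowest terms.  A matrix x lies in
   A(q1,B1) /\ A(q2,B2) iff for every column j the number y_j = (e x)_j satisfies
   d y_j in B1_j + Z and k y_j in B2_j + Z, so the indicator is a product over j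
   of 1-periodic functions of y_j.  Integrating out a coordinate x_(i,j) with
   e_i <> 0 replaces the j-th factor by its mean over a period, because
   t |-> e_i t + c runs through |e_i| whole periods.  The volume is therefore the
   product of these means, which depends only on (d, k), and
   k / d = sg(q1 . q2) |q2| / |q1|. *)

Section affine_change_of_variables.
Context (R : realType).
Local Notation mu := (@lebesgue_measure R).

(* Typed on [measurableTypeR R] so that the pushforward of [mu] along it is a
   measure on the Lebesgue sigma-algebra, as [lebesgue_measure_unique] needs. *)
Definition affine (a b : R) : measurableTypeR R -> measurableTypeR R :=
  fun x => a * x + b.

Lemma measurable_affine (a b : R) : measurable_fun setT (affine a b).
Proof. exact: measurable_funD. Qed.

Lemma preimage_affine_itv_oc_gt0 (a b x y : R) : 0 < a ->
  affine a b @^-1` `]x, y]%classic = `](x - b) / a, (y - b) / a]%classic.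
Proof.
move=> a0; apply/seteqP; split => t; rewrite /= !in_itv /= /affine;
  rewrite ltr_pdivrMr // ler_pdivlMr // => /andP[] *; apply/andP; split; lra.
Qed.

Lemma preimage_affine_itv_oc_lt0 (a b x y : R) : a < 0 ->
  affine a b @^-1` `]x, y]%classic = `[(y - b) / a, (x - b) / a[%classic.
Proof.
move=> a0; apply/seteqP; split => t; rewrite /= !in_itv /= /affine;
  rewrite ltr_ndivlMr // ler_ndivrMr // => /andP[] *; apply/andP; split; lra.
Qed.

Lemma lebesgue_measure_affine_preimage (a b : R) : a != 0 ->
  forall A, measurable A -> mu A = (`|a|%:E * mu (affine a b @^-1` A))%E.
Proof.
move=> a0.
unshelve epose proof (@lebesgue_measure_unique R
  (mscale (NngNum (normr_ge0 a)) (pushforward mu (affine a b)))) as mu_uniq.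
  exact: measurable_affine.
apply: mu_uniq.
move=> _ [[x y] _ <-] /=; rewrite /mscale /pushforward /=.
have [a_gt0|a_le0] := ltrP 0 a.
  rewrite /pushforward preimage_affine_itv_oc_gt0 // !lebesgue_measure_itv /=.
  rewrite !lte_fin ltr_pM2r ?invr_gt0 // ltrD2r.
  case: ifP => _; last by rewrite mule0.
  rewrite gtr0_norm // -!EFinD -EFinM; congr EFin; field; exact: lt0r_neq0.
have a_lt0 : a < 0 by rewrite lt_neqAle a0.
rewrite /pushforward preimage_affine_itv_oc_lt0 // !lebesgue_measure_itv /=.
rewrite !lte_fin ltr_nM2r ?invr_lt0 // ltrD2r.
case: ifP => _; last by rewrite mule0.
rewrite ltr0_norm // -!EFinD -EFinM; congr EFin; field; exact: ltr0_neq0.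
Qed.

Lemma ge0_integral_affine (a b : R) (D : set R) (f : R -> \bar R) :
  a != 0 -> measurable D -> measurable_fun D f -> (forall y, D y -> (0 <= f y)%E) ->
  (\int[mu]_(x in affine a b @^-1` D) f (affine a b x)
   = (`|a|^-1)%:E * \int[mu]_(y in D) f y)%E.
Proof.
move=> a0 mD mf f0.
rewrite -(ge0_integral_pushforward (measurable_affine a b) _ mD mf); last first.
  by move=> y /set_mem; exact: f0.
have a1_ge0 : 0 <= `|a|^-1 by rewrite invr_ge0.
rewrite -(ge0_integral_mscale mu mD (NngNum a1_ge0) mf f0).
apply: eq_measure_integral; first exact: measurable_affine.
move=> ? A mA _.
rewrite /= /mscale /pushforward /= (lebesgue_measure_affine_preimage b a0 mA).
by rewrite muleA -EFinM mulVf ?normr_eq0 // mul1e.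
Qed.

Lemma preimage_affine_itv_cc (a b : R) : a != 0 ->
  exists s, affine a b @^-1` `[s, s + `|a|]%classic = `[0, 1]%classic.
Proof.
move=> a0; have [a_gt0|a_le0] := ltrP 0 a.
  exists b; rewrite gtr0_norm //; apply/seteqP; split => t;
    rewrite /= !in_itv /= /affine => /andP[h1 h2]; apply/andP; split.
  - by rewrite -(pmulr_rge0 _ a_gt0); lra.
  - by rewrite -(ler_pM2l a_gt0) mulr1; lra.
  - by have := mulr_ge0 (ltW a_gt0) h1; lra.
  - by move: h2; rewrite -(ler_pM2l a_gt0) mulr1; lra.
have a_lt0 : a < 0 by rewrite lt_neqAle a0.
exists (b + a); rewrite ltr0_norm //; apply/seteqP; split => t;
  rewrite /= !in_itv /= /affine => /andP[h1 h2]; apply/andP; split.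
- by rewrite -(nmulr_rle0 _ a_lt0); lra.
- by rewrite -(ler_nM2l a_lt0) mulr1; lra.
- have : a * 1 <= a * t by rewrite ler_nM2l.
  lra.
- have : a * t <= 0 by rewrite nmulr_rle0.
  lra.
Qed.

End affine_change_of_variables.

Section periodic_integral.
Context (R : realType) (f : R -> \bar R).
Hypothesis mf : measurable_fun setT f.
Hypothesis f_ge0 : forall y, (0 <= f y)%E.
Local Notation mu := (@lebesgue_measure R).

Let mf_on (D : set R) : measurable_fun D f.
Proof. exact: measurable_funS mf. Qed.

Lemma ge0_integral_itv_co_split (x y z : R) : x <= y -> y <= z ->
  (\int[mu]_(t in `[x, z[) f t
   = \int[mu]_(t in `[x, y[) f t + \int[mu]_(t in `[y, z[) f t)%E.
Proof.
move=> xy yz; rewrite (@itv_bndbnd_setU _ _ _ (BLeft y)) ?bnd_simp //.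
rewrite ge0_integral_setU //; first exact: mf_on.
apply: (@lt_disjoint _ `[x, y[ `[y, z[) => s t.
by rewrite !in_itv /= => /andP[_ sy] /andP[yt _]; exact: lt_le_trans sy yt.
Qed.

Lemma ge0_integral_itv_co_shift (b c d : R) :
  (\int[mu]_(t in `[c, d[) f (t + b) = \int[mu]_(t in `[(c + b)%R, (d + b)%R[) f t)%E.
Proof.
have pre : affine 1 b @^-1` `[(c + b)%R, (d + b)%R[%classic = `[c, d[%classic.
  by apply/seteqP; split => t; rewrite /= !in_itv /= /affine mul1r;
    move=> /andP[] *; apply/andP; split; lra.
have := @ge0_integral_affine R 1 b `[(c + b)%R, (d + b)%R[%classic f (oner_neq0 R)
  (measurable_itv _) (@mf_on _) (fun y _ => f_ge0 y).
rewrite normr1 invr1 mul1e pre => <-.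
by apply: eq_integral => t _; rewrite /affine mul1r.
Qed.

Hypothesis f_periodic : forall y, f (y + 1) = f y.

Lemma periodic_int (k : int) (y : R) : f (y + k%:~R) = f y.
Proof.
have periodic_nat (n : nat) z : f (z + n%:R) = f z.
  by elim: n z => [|n IH] z; rewrite ?addr0 // -natr1 addrA f_periodic IH.
case: k => n; first exact: periodic_nat.
by rewrite NegzE mulrNz -[in RHS](subrK n.+1%:R y) periodic_nat.
Qed.

Lemma ge0_integral_itv_co_period (s : R) :
  (\int[mu]_(t in `[s, (s + 1)%R[) f t = \int[mu]_(t in `[0%R, 1%R[) f t)%E.
Proof.
pose k := Num.floor s; pose s' := s - k%:~R.
have s'_ge0 : 0 <= s' by rewrite subr_ge0 floor_le.
have s'_lt1 : s' < 1 by rewrite ltrBlDl -intrD1 floorD1_gt.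
have -> : (\int[mu]_(t in `[s, (s + 1)%R[) f t
           = \int[mu]_(t in `[s', (s' + 1)%R[) f t)%E.
  under [RHS]eq_integral do rewrite -(periodic_int k).
  by rewrite ge0_integral_itv_co_shift /s' subrK addrAC subrK.
rewrite (@ge0_integral_itv_co_split _ 1); [|lra|lra].
have -> : (\int[mu]_(t in `[1%R, (s' + 1)%R[) f t = \int[mu]_(t in `[0%R, s'[) f t)%E.
  rewrite -[X in `[X, _[%classic](add0r 1) -ge0_integral_itv_co_shift.
  by apply: eq_integral => t _; rewrite f_periodic.
by rewrite addeC -(@ge0_integral_itv_co_split 0 s' 1) // ltW.
Qed.

Lemma ge0_integral_itv_co_periods (N : nat) (s : R) :
  (\int[mu]_(t in `[s, (s + N%:R)%R[) f t
   = N%:R%:E * \int[mu]_(t in `[0%R, 1%R[) f t)%E.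
Proof.
elim: N => [|N IH].
  by rewrite addr0 set_itvco0 integral_set0 mul0e.
rewrite (@ge0_integral_itv_co_split _ (s + N%:R)); last 2 first.
- by rewrite lerDl.
- by rewrite lerD2l ler_nat.
rewrite IH -natr1 (addrA s) ge0_integral_itv_co_period.
by rewrite EFinD ge0_muleDl ?lee_fin // mul1e.
Qed.

Lemma ge0_integral01_periodic_comp_int (k : int) (a : R) : k != 0 ->
  (\int[mu]_(t in `[0%R, 1%R]) f (k%:~R * t + a) = \int[mu]_(t in `[0%R, 1%R[) f t)%E.
Proof.
move=> k0; have kR0 : k%:~R != 0 :> R by rewrite intr_eq0.
have [s pre] := preimage_affine_itv_cc a kR0.
rewrite -pre (ge0_integral_affine a kR0 (measurable_itv _) (@mf_on _)); last first.
  by move=> *; exact: f_ge0.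
rewrite -integral_itv_bndo_bndc // -intr_norm -abszE.
rewrite ge0_integral_itv_co_periods muleA -EFinM mulVf ?mul1e //.
by rewrite pnatr_eq0 absz_eq0.
Qed.

End periodic_integral.

Section iterated_integral_of_product.
Context (R : realType) (n m : nat) (e : 'I_n -> int) (h : 'I_m -> R -> R).
Hypothesis mh : forall j, measurable_fun setT (fun y => (h j y)%:E).
Hypothesis h_ge0 : forall j y, 0 <= h j y.
Hypothesis h_periodic : forall j y, h j (y + 1) = h j y.
Local Notation mu := (@lebesgue_measure R).
Local Notation cell := ('I_n * 'I_m)%type.

Definition lincomb (x : cell -> R) (j : 'I_m) : R := \sum_(i < n) (e i)%:~R * x (i, j).

Definition mean (j : 'I_m) : \bar R := (\int[mu]_(t in `[0%R, 1%R[) (h j t)%:E)%E.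

Definition averaged (s : seq cell) (j : 'I_m) : bool :=
  has (fun k : cell => (k.2 == j) && (e k.1 != 0)) s.

(* The j-th factor of the product once the coordinates listed in [s] have been
   integrated out: it has become its mean as soon as one of them is some
   x (i, j) with e i != 0, and is untouched otherwise. *)
Definition partial_factor (s : seq cell) (x : cell -> R) (j : 'I_m) : \bar R :=
  if averaged s j then mean j else (h j (lincomb x j))%:E.

Definition update (x : cell -> R) (v : cell) (t : R) : cell -> R :=
  fun k => if k == v then t else x k.

Definition in_unit_cube (x : cell -> R) := forall k, 0 <= x k <= 1.

Lemma averaged_cons i j0 s j :
  averaged ((i, j0) :: s) j = ((j0 == j) && (e i != 0)) || averaged s j.
Proof. by []. Qed.

Lemma partial_factor_ge0 s x j : (0 <= partial_factor s x j)%E.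
Proof.
rewrite /partial_factor; case: ifP => _; last by rewrite lee_fin h_ge0.
by apply: integral_ge0 => t _; rewrite lee_fin h_ge0.
Qed.

Lemma lincomb_update_neq x i j0 j t : j != j0 ->
  lincomb (update x (i, j0) t) j = lincomb x j.
Proof.
move=> jj0; apply: eq_bigr => i' _.
by rewrite /update xpair_eqE (negbTE jj0) andbF.
Qed.

Lemma lincomb_update x i j t :
  lincomb (update x (i, j) t) j = (e i)%:~R * t + (lincomb x j - (e i)%:~R * x (i, j)).
Proof.
rewrite /lincomb (bigD1 i) //= [in RHS](bigD1 i) //= {1}/update eqxx.
rewrite [X in _ = _ + X]addrAC subrr add0r; congr (_ + _).
by apply: eq_bigr => i' i'i; rewrite /update xpair_eqE (negbTE i'i).
Qed.

Lemma partial_factor_update_neq s x i j0 j t : j != j0 ->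
  partial_factor s (update x (i, j0) t) j = partial_factor ((i, j0) :: s) x j.
Proof.
move=> jj0; rewrite /partial_factor averaged_cons eq_sym (negbTE jj0) /=.
by rewrite lincomb_update_neq.
Qed.

Lemma measurable_partial_factor_update s x i j :
  measurable_fun setT (fun t => partial_factor s (update x (i, j) t) j).
Proof.
rewrite /partial_factor; case: (averaged s j); first exact: measurable_cst.
pose a := lincomb x j - (e i)%:~R * x (i, j).
have -> : (fun t => (h j (lincomb (update x (i, j) t) j))%:E)
          = (fun y => (h j y)%:E) \o affine (e i)%:~R a.
  by apply/funext => t; rewrite /= lincomb_update.
exact: measurableT_comp (mh j) (measurable_affine _ _).
Qed.

Lemma integral01_partial_factor_update s x i j :
  (\int[mu]_(t in `[0%R, 1%R]) partial_factor s (update x (i, j) t) j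
   = partial_factor ((i, j) :: s) x j)%E.
Proof.
have [const|] := boolP (averaged s j || (e i == 0)).
  have cst t :
      partial_factor s (update x (i, j) t) j = partial_factor ((i, j) :: s) x j.
    rewrite /partial_factor averaged_cons.
    case/orP: const => [->|/eqP ei0]; first by rewrite orbT.
    by rewrite ei0 !eqxx /= lincomb_update ei0 mulr0z !mul0r add0r oppr0 addr0.
  under eq_integral do rewrite cst.
  by rewrite integral_cst //= lebesgue_measure_itv /= lte_fin ltr01 -EFinD subr0 mule1.
rewrite negb_or => /andP[/negbTE not_averaged ei0].
rewrite /partial_factor averaged_cons eqxx ei0 not_averaged /=.
under eq_integral do rewrite lincomb_update.
apply: (ge0_integral01_periodic_comp_int (f := fun y => (h j y)%:E)) => //.
- by move=> y; rewrite lee_fin h_ge0.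
- by move=> y; rewrite h_periodic.
Qed.

Variable G : (cell -> R) -> \bar R.
Hypothesis G_prod : forall x, in_unit_cube x ->
  G x = (\prod_(j < m) (h j (lincomb x j))%:E)%E.

Lemma iter_int01_prod s x : in_unit_cube x ->
  iter_int01 s G x = (\prod_(j < m) partial_factor s x j)%E.
Proof.
elim: s x => [|[i j0] s IH] x x01 /=.
  by rewrite G_prod //; apply: eq_bigr => j _; rewrite /partial_factor.
have x01_update t : 0 <= t <= 1 -> in_unit_cube (update x (i, j0) t).
  by move=> t01 k; rewrite /update; case: ifP.
pose C := (\prod_(j < m | j != j0) partial_factor ((i, j0) :: s) x j)%E.
transitivity
  (\int[mu]_(t in `[0%R, 1%R]) (partial_factor s (update x (i, j0) t) j0 * C))%E.
  apply: eq_integral => t /set_mem; rewrite /= in_itv /= => t01.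
  rewrite IH; last exact: x01_update.
  rewrite (bigD1 j0) //=; congr (_ * _)%E.
  by apply: eq_bigr => j jj0; rewrite partial_factor_update_neq.
rewrite ge0_integralZr //.
- by rewrite integral01_partial_factor_update [RHS](bigD1 j0).
- exact: measurable_funS (measurable_partial_factor_update s x i j0).
- by move=> t _; exact: partial_factor_ge0.
- by apply: prode_ge0 => j _; exact: partial_factor_ge0.
Qed.

Lemma iter_int01_prod_enum : (exists i, e i != 0) ->
  iter_int01 (enum [the finType of cell]) G (fun=> 0) = (\prod_(j < m) mean j)%E.
Proof.
move=> [i ei0]; rewrite iter_int01_prod; last by move=> k; rewrite lexx ler01.
apply: eq_bigr => j _; rewrite /partial_factor ifT //.
by apply/hasP; exists (i, j); rewrite ?mem_enum //= eqxx.
Qed.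

End iterated_integral_of_product.

Section circle_ball_preimage.
Context (R : realType).
Import numFieldNormedType.Exports.

Definition circle_ball_preimage (w : int) (a r : R) : set R :=
  [set y | exists z : int, `|w%:~R * y + z%:~R - a| < r].

Definition pair_indicator (w u : int) (a b r1 r2 : R) (y : R) : R :=
  \1_(circle_ball_preimage w a r1 `&` circle_ball_preimage u b r2) y.

Lemma open_circle_ball_preimage w a r : open (circle_ball_preimage w a r).
Proof.
have -> : circle_ball_preimage w a r =
    \bigcup_(z in [set: int])
      ((fun y => `|w%:~R * y + z%:~R - a|) @^-1` [set t | t < r]).
  by apply/seteqP; split => y /= [z zy]; exists z.
apply: bigcup_open => z _; apply: open_comp; last exact: open_lt.
move=> y _; apply: cvg_norm.
apply: cvgB; last exact: cvg_cst.
by apply: cvgD; [exact: mulrl_continuous | exact: cvg_cst].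
Qed.

Lemma measurable_pair_indicator w u a b r1 r2 :
  measurable_fun setT (fun y => (pair_indicator w u a b r1 r2 y)%:E).
Proof.
apply/measurable_EFinP; apply: measurable_indic; apply: open_measurable.
by apply: openI; exact: open_circle_ball_preimage.
Qed.

Lemma pair_indicator_ge0 w u a b r1 r2 y : 0 <= pair_indicator w u a b r1 r2 y.
Proof. by rewrite /pair_indicator indicE. Qed.

Lemma circle_ball_preimageD1 w a r y :
  circle_ball_preimage w a r (y + 1) <-> circle_ball_preimage w a r y.
Proof.
split => -[z zy].
  by exists (z + w); move: zy; rewrite intrD; congr (`|_| < _); ring.
by exists (z - w); move: zy; rewrite intrB; congr (`|_| < _); ring.
Qed.

Lemma pair_indicatorD1 w u a b r1 r2 y :
  pair_indicator w u a b r1 r2 (y + 1) = pair_indicator w u a b r1 r2 y.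
Proof.
rewrite /pair_indicator !indicE; congr ((_ : bool)%:R).
apply/idP/idP => /set_mem[h1 h2].
  by apply/mem_set; split; apply/circle_ball_preimageD1.
by apply/mem_set; split; apply/circle_ball_preimageD1.
Qed.

End circle_ball_preimage.

Lemma indic_prod (R : comPzRingType) (T U : Type) (I : finType) (A : set T)
    (B : I -> set U) (x : T) (y : I -> U) :
  (A x <-> forall j, B j (y j)) -> \1_A x = \prod_(j : I) (\1_(B j) (y j) : R).
Proof.
move=> AB; rewrite indicE; have [Ax|nAx] := pselect (A x).
  rewrite mem_set //; apply/esym/big1 => j _.
  by rewrite indicE mem_set //; exact: (proj1 AB Ax j).
have [j nBj] : exists j, ~ B j (y j).
  by apply/existsNP => By; exact: nAx (proj2 AB By).
by rewrite memNset // (bigD1 j) //= indicE memNset // mul0r.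
Qed.

Section A_set_parallel.
Context (R : realType) (n m : nat).

Lemma A_setP (q : 'rV[int]_n) (c : 'rV[R]_m) rho (M : 'M[R]_(n, m)) :
  A_set q c rho M <-> (forall i j, 0 <= M i j <= 1) /\
    forall j, exists z : int, `|\sum_i (q 0 i)%:~R * M i j + z%:~R - c 0 j| < rho.
Proof.
split => -[M01 ball]; split => //.
  move: ball => [p [p' near_c]] j; exists (p 0 j + p' 0 j).
  move: (near_c j); rewrite !mxE; under eq_bigr do rewrite mxE.
  by rewrite intrD addrA.
have [z zj] := choice ball.
exists 0, (\row_j z j) => j; rewrite !mxE; under eq_bigr do rewrite mxE.
by rewrite addr0; exact: zj.
Qed.

Variables (w u : int) (e q1 q2 : 'rV[int]_n).
Hypothesis q1E : q1 = w *: e.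
Hypothesis q2E : q2 = u *: e.

Lemma indicator_A_setI_parallel (c1 c2 : 'rV[R]_m) rho1 rho2 (x : 'I_n * 'I_m -> R) :
  in_unit_cube x ->
  (\1_(A_set q1 c1 rho1 `&` A_set q2 c2 rho2) (\matrix_(i, j) x (i, j)) : R)
  = \prod_(j < m) pair_indicator w u (c1 0 j) (c2 0 j) rho1 rho2 (lincomb (e 0) x j).
Proof.
move=> x01; set M := \matrix_(i, j) x (i, j).
have M01 i j : 0 <= M i j <= 1 by rewrite mxE; exact: x01.
have qM (q : 'rV[int]_n) k : q = k *: e ->
    forall j, \sum_i (q 0 i)%:~R * M i j = k%:~R * lincomb (e 0) x j.
  move=> -> j; rewrite /lincomb mulr_sumr; apply: eq_bigr => i _.
  by rewrite !mxE intrM mulrA.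
pose B j :=
  circle_ball_preimage w (c1 0 j) rho1 `&` circle_ball_preimage u (c2 0 j) rho2.
apply: (@indic_prod _ _ _ _ _ B M (lincomb (e 0) x)); split.
  move=> [/A_setP[_ ball1] /A_setP[_ ball2]] j; split.
    by have [z zj] := ball1 j; exists z; rewrite -(qM _ _ q1E).
  by have [z zj] := ball2 j; exists z; rewrite -(qM _ _ q2E).
move=> Bx; split; apply/A_setP; split => // j.
  by have [[z zj] _] := Bx j; exists z; rewrite (qM _ _ q1E).
by have [_ [z zj]] := Bx j; exists z; rewrite (qM _ _ q2E).
Qed.

Lemma vol01_A_setI_parallel (c1 c2 : 'rV[R]_m) rho1 rho2 : e != 0 ->
  vol01 (A_set q1 c1 rho1 `&` A_set q2 c2 rho2) = (\prod_(j < m)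
    \int[lebesgue_measure]_(t in `[0%R, 1%R[)
      (pair_indicator w u (c1 0 j) (c2 0 j) rho1 rho2 t)%:E)%E.
Proof.
move=> /rV0Pn e_neq0.
apply: (@iter_int01_prod_enum R n m (e 0)); last exact: e_neq0.
- by move=> j; exact: measurable_pair_indicator.
- by move=> j y; exact: pair_indicator_ge0.
- by move=> j y; exact: pair_indicatorD1.
- by move=> x x01; rewrite indicator_A_setI_parallel // prodEFin.
Qed.

End A_set_parallel.

Definition dir_ratio (n : nat) (q1 q2 : 'rV[int]_n) : rat :=
  (Num.sg (dotZ q1 q2))%:~R * (supnormZ q2)%:~R / (supnormZ q1)%:~R.

Section scaled_integer_vectors.
Context (n : nat).
Implicit Types (e q : 'rV[int]_n) (d k : int).

Lemma supnormZ_scale k e : supnormZ (k *: e) = `|k| * supnormZ e.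
Proof.
rewrite /supnormZ; under eq_bigr do rewrite mxE normrM.
by elim/big_rec2: _ => [|i y1 y2 _ ->]; rewrite ?mulr0 // maxr_pMr.
Qed.

Lemma supnormZ_gt0 e : e != 0 -> 0 < supnormZ e.
Proof.
move=> /rV0Pn[i ei]; rewrite /supnormZ (bigD1 i) //= lt_max.
by rewrite normr_gt0 ei.
Qed.

Lemma dotZ_scale d k e : dotZ (d *: e) (k *: e) = d * k * dotZ e e.
Proof.
by rewrite /dotZ mulr_sumr; apply: eq_bigr => i _; rewrite !mxE; ring.
Qed.

Lemma dotZ_gt0 e : e != 0 -> 0 < dotZ e e.
Proof.
move=> /rV0Pn[i ei]; rewrite /dotZ (bigD1 i) //=.
apply: ltr_pwDl; first by rewrite lt_def mulf_neq0 //= -expr2 sqr_ge0.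
by apply: sumr_ge0 => j _; rewrite -expr2 sqr_ge0.
Qed.

Lemma dir_ratio_scale d k e : 0 < d -> e != 0 ->
  dir_ratio (d *: e) (k *: e) = k%:~R / d%:~R.
Proof.
move=> d_gt0 e_neq0; rewrite /dir_ratio dotZ_scale !supnormZ_scale.
rewrite !sgrM gtr0_sg // (gtr0_sg (dotZ_gt0 e_neq0)) mul1r mulr1.
rewrite (gtr0_norm d_gt0).
have E_neq0 : (supnormZ e)%:~R != 0 :> rat.
  by rewrite intr_eq0 gt_eqF ?supnormZ_gt0.
have d_neq0 : d%:~R != 0 :> rat by rewrite intr_eq0 gt_eqF.
rewrite [k in RHS]numEsg !intrM; field.
by rewrite E_neq0 d_neq0.
Qed.

Lemma cross_eq_scale (q1 q2 : 'rV[int]_n) i0 : q1 0 i0 != 0 ->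
    (forall i, q2 0 i * q1 0 i0 = q1 0 i * q2 0 i0) ->
  exists r : rat, exists2 e, e != 0 & q1 = denq r *: e /\ q2 = numq r *: e.
Proof.
move=> q1i0 cross; pose r : rat := (q2 0 i0)%:~R / (q1 0 i0)%:~R.
exists r; set d := denq r; set nu := numq r.
have d_neq0 : d != 0 by rewrite gt_eqF ?denq_gt0.
have nu_d : q2 0 i0 * d = nu * q1 0 i0.
  have := divq_num_den r; rewrite {2}/r => /eqP.
  rewrite eqr_div ?intr_eq0 // => /eqP nu_q1.
  by apply: (@intr_inj rat); rewrite !intrM nu_q1.
have cross_d i : q2 0 i * d = nu * q1 0 i.
  apply: (mulIf q1i0); rewrite -mulrA [d * _]mulrC mulrA cross -mulrA nu_d; ring.
have d_dvd i : (d %| q1 0%R i)%Z.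
  have cop : coprimez d nu by rewrite coprimezE coprime_sym coprime_num_den.
  by rewrite -(Gauss_dvdzr _ cop) -cross_d dvdz_mull.
exists (\row_i (q1 0%R i %/ d)%Z).
  apply/rV0Pn; exists i0; rewrite mxE; apply: contra q1i0 => /eqP e0.
  by rewrite -(divzK (d_dvd i0)) e0 mul0r.
split; apply/rowP => i; rewrite !mxE.
  by rewrite mulrC divzK.
by apply: (mulIf d_neq0); rewrite cross_d -mulrA divzK // mulrC.
Qed.

End scaled_integer_vectors.

Lemma parallelZ_cross (R : realType) n (q1 q2 : 'rV[int]_n) : parallelZ R q1 q2 ->
  forall i k, q2 0 i * q1 0 k = q1 0 i * q2 0 k.
Proof.
move=> [lam /matrixP lamE] i k; apply: (@intr_inj R).
have q2E j : (q2 0 j)%:~R = lam * (q1 0 j)%:~R :> R by move: (lamE 0 j); rewrite !mxE.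
by rewrite !intrM !q2E; ring.
Qed.

Lemma parallelZ_scale (R : realType) n (q1 q2 : 'rV[int]_n) :
    q1 != 0 -> parallelZ R q1 q2 ->
  exists2 e : 'rV[int]_n, e != 0 &
    q1 = denq (dir_ratio q1 q2) *: e /\ q2 = numq (dir_ratio q1 q2) *: e.
Proof.
move=> /rV0Pn[i0 q1i0] /parallelZ_cross cross.
have [r [e e_neq0 [q1E q2E]]] := cross_eq_scale q1i0 (cross ^~ i0).
have -> : dir_ratio q1 q2 = r.
  by rewrite q1E q2E dir_ratio_scale ?denq_gt0 // divq_num_den.
by exists e.
Qed.

Theorem mainTheorem7 (R : realType) (n n' m : nat)
  (c1 c2 : 'rV[R]_m) (rho1 rho2 : R)
  (q1 q2 : 'rV[int]_n) (r1 r2 : 'rV[int]_n') :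
  0 < rho1 -> 0 < rho2 ->
  q1 != 0 -> q2 != 0 -> r1 != 0 -> r2 != 0 ->
  parallelZ R q1 q2 -> parallelZ R r1 r2 ->
  supnormZ q1 = supnormZ r1 -> supnormZ q2 = supnormZ r2 ->
  Num.sg (dotZ q1 q2) = Num.sg (dotZ r1 r2) ->
  vol01 (A_set q1 c1 rho1 `&` A_set q2 c2 rho2)
  = vol01 (A_set r1 c1 rho1 `&` A_set r2 c2 rho2).
Proof.
move=> _ _ q1_neq0 _ r1_neq0 _ q_par r_par norm1 norm2 sg_dot.
have [e e_neq0 [q1E q2E]] := parallelZ_scale q1_neq0 q_par.
have [f f_neq0 [r1E r2E]] := parallelZ_scale r1_neq0 r_par.
rewrite (vol01_A_setI_parallel q1E q2E) // (vol01_A_setI_parallel r1E r2E) //.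
by rewrite /dir_ratio norm1 norm2 sg_dot.
Qed.
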